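(* Let $A, B$ be sets with $\mathbf{P}(B) \subseteq \mathcal{P}(B)\setminus\{\varnothing\}$ a set of non-empty predicates on $B$, and let $R \subseteq A \times B$ be a relation. Then $R$ is belief-complete with respect to $\mathbf{P}(B)$ if and only if, for every set $C$, every set $\mathbf{P}(C)\subseteq\mathcal{P}(C)\setminus\{\varnothing\}$ of non-empty predicates on $C$, and every relation $S \subseteq B\times C$ such that (1) $S$ is assumption-complete with respect to $\mathbf{P}(C)$, and (2) $\boxplus_S p = \{ y\in B \mid S(y) = p\} \in \mathbf{P}(B)$ for every $p\in\mathbf{P}(C)$ (where $S(y)=\{z \mid S(y,z)\}$), the relational composite $R;S \subseteq A\times C$, given by $(R;S)(x,z)\iff\exists y.\,[R(x,y)\wedge S(y,z)]$, is assumption-complete with respect to $\mathbf{P}(C)$.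
   Context: A relation $R \subseteq X \times Y$ is assumption-complete with respect to a set $\mathbf{P}(Y)$ of subsets of $Y$ if for every $p \in \mathbf{P}(Y)$ there is $x \in X$ such that for all $y \in Y$: $R(x,y) \iff y \in p$. It is belief-complete with respect to $\mathbf{P}(Y)$ if for every $p \in \mathbf{P}(Y)$ there is $x \in X$ such that for all $y\in Y$, $R(x,y)\Rightarrow y\in p$, and moreover there exists $y$ with $R(x,y)$. *)

From mathcomp Require Import all_boot boolp classical_sets.
Set Implicit Arguments. Unset Strict Implicit. Unset Printing Implicit Defensive.
Local Open Scope classical_set_scope.

Definition assumption_complete (X Y : Type) (R : X -> Y -> Prop)
  (PY : set (set Y)) : Prop :=
  forall p, PY p -> exists x : X, forall y : Y, R x y <-> p y.

Definition belief_complete (X Y : Type) (R : X -> Y -> Prop)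
  (PY : set (set Y)) : Prop :=
  forall p, PY p -> exists x : X,
    (forall y : Y, R x y -> p y) /\ (exists y : Y, R x y).

Definition rel_image (Y Z : Type) (S : Y -> Z -> Prop) (y : Y) : set Z :=
  [set z | S y z].

Definition boxplus (Y Z : Type) (S : Y -> Z -> Prop) (p : set Z) : set Y :=
  [set y | rel_image S y = p].

Definition rel_comp (X Y Z : Type) (R : X -> Y -> Prop) (S : Y -> Z -> Prop)
  : X -> Z -> Prop :=
  fun x z => exists y, R x y /\ S y z.

Definition nonempty_preds (Y : Type) (PY : set (set Y)) : Prop :=
  forall p, PY p -> exists y, p y.

(* Forward: a belief-complete witness for [boxplus S p] believes only points
   whose [S]-image is exactly [p], and believes at least one, so its
   [R;S]-image is [p].  Backward: given [p], test with the relation [S] from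
   [B] to [option B] relating [y] to [Some z] for [z] in [p] when [y] is in
   [p], and to [None] otherwise; then [boxplus S (some_set p) = p], and an
   [R;S]-witness for [some_set p] cannot reach [None], i.e. believes only
   points of [p]. *)
From mathcomp Require Import all_boot boolp classical_sets.
Set Implicit Arguments. Unset Strict Implicit. Unset Printing Implicit Defensive.
Local Open Scope classical_set_scope.

Section Composite.
Variables (A B C : Type) (R : A -> B -> Prop) (S : B -> C -> Prop).

Lemma rel_comp_boxplus (p : set C) (x : A) :
  (forall y, R x y -> boxplus S p y) -> (exists y, R x y) ->
  forall z, rel_comp R S x z <-> p z.
Proof.
move=> Rp [y0 Rxy0] z; split.
- by move=> [y [/Rp <-]].
- by move=> pz; exists y0; split => //; rewrite -(Rp _ Rxy0) in pz.
Qed.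

Lemma assumption_complete_rel_comp (PC : set (set C)) (PB : set (set B)) :
  belief_complete R PB -> (forall p, PC p -> PB (boxplus S p)) ->
  assumption_complete (rel_comp R S) PC.
Proof.
move=> hR hbox p Pp; have [x [Rp Rx]] := hR _ (hbox p Pp).
by exists x; apply: rel_comp_boxplus.
Qed.

End Composite.

Section TestRelation.
Variables (B : Type) (p : set B).

Definition some_set : set (option B) :=
  fun o => if o is Some z then p z else False.

Definition test_rel (y : B) (o : option B) : Prop :=
  if o is Some z then p y /\ p z else ~ p y.

Lemma boxplus_test_rel : boxplus test_rel some_set = p.
Proof.
apply/funext => y; apply/propext; split.
- move=> E; apply: contrapT => npy.
  by have : rel_image test_rel y None by []; rewrite E.
- move=> py; apply/funext => -[z|]; apply/propext; rewrite /rel_image /=; tauto.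
Qed.

Lemma assumption_complete_test_rel :
  (exists z, p z) -> assumption_complete test_rel [set some_set].
Proof. by move=> [z0 pz0] _ ->; exists z0 => -[z|] /=; tauto. Qed.

Lemma rel_comp_test_rel_belief (A : Type) (R : A -> B -> Prop) (x : A) :
  (exists z, p z) -> (forall o, rel_comp R test_rel x o <-> some_set o) ->
  (forall y, R x y -> p y) /\ (exists y, R x y).
Proof.
move=> [z0 pz0] Hx; split.
- move=> y Rxy; apply: contrapT => npy.
  by apply/(Hx None); exists y.
- by have [y [Rxy _]] := proj2 (Hx (Some z0)) pz0; exists y.
Qed.

End TestRelation.

Theorem theorem1 (A B : Type) (PB : set (set B)) (hPB : nonempty_preds PB)
  (R : A -> B -> Prop) :
  belief_complete R PB <->
  (forall (C : Type) (PC : set (set C)), nonempty_preds PC ->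
     forall S : B -> C -> Prop,
       assumption_complete S PC ->
       (forall p, PC p -> PB (boxplus S p)) ->
       assumption_complete (rel_comp R S) PC).
Proof.
split=> [hR C PC _ S _ hbox | H p Pp].
  exact: assumption_complete_rel_comp hR hbox.
have p_ne := hPB p Pp.
have PC_ne : nonempty_preds [set some_set p].
  by move: p_ne => [z pz] _ ->; exists (Some z).
have hbox q : [set some_set p] q -> PB (boxplus (test_rel p) q).
  by move=> ->; rewrite boxplus_test_rel.
have [x Hx] := H _ _ PC_ne _ (assumption_complete_test_rel p_ne) hbox _ erefl.
by exists x; apply: rel_comp_test_rel_belief.
Qed.
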